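(* Let $r,\sigma,s,c,\lambda,a,q,d,\gamma,b>0$ with $a<\lambda$, $b<\gamma$, $1-\lambda r>0$, $1-br>0$, and $\theta=\sqrt{2r/\sigma^2}$. For $w>1$ let $$G(w)=\frac{(1-\lambda r)\big((\ln w-1)w^2+\ln w+1\big)-cr\theta(w^2+1)}{\theta(1-ar)(w-1)^2}+\frac{s}{1-ar}-\frac{q}{1-br}-\frac{w+1}{\theta(w-1)}-\frac{2\big(\theta rd-(1-\gamma r)\ln w\big)w}{\theta(1-br)(w-1)^2}.$$ Assume there exists $\hat w>1$ with $G(\hat w)=0$ and $$0\le(1-br)(\hat w^2-1)+2\big(\theta rd-(1-\gamma r)\ln\hat w\big)\hat w<(1-br)(\hat w-1)^2.$$ Let $\bar x_2=\frac{q}{1-br}+\frac{\hat w+1}{\theta(\hat w-1)}+\frac{2(\theta rd-(1-\gamma r)\ln\hat w)\hat w}{\theta(1-br)(\hat w-1)^2}$, $\bar x_1=\bar x_2-\frac{\ln\hat w}{\theta}$, $$C_{21}=\frac{e^{-\theta\bar x_2}}{2r}\Big[(1-br)\Big(\bar x_2+\frac1\theta\Big)-q\Big],\quad C_{22}=\frac{e^{\theta\bar x_2}}{2r}\Big[(1-br)\Big(\bar x_2-\frac1\theta\Big)-q\Big],$$ $\varphi_2(x)=C_{21}e^{\theta x}+C_{22}e^{-\theta x}+\frac{q-x}{r}$, and $$W_2(x)=\begin{cases}-bx & x\ge\bar x_2\\ \varphi_2(x)&\bar x_1<x<\bar x_2\\ -b\bar x_2+d+\gamma(\bar x_2-x)&x\le\bar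 x_1.\end{cases}$$ Then $$\{x\in\mathbb{R}:W_2(x)>-bx\}=(-\infty,\bar x_2),\qquad\{x\in\mathbb{R}:W_2(x)=-bx\}=[\bar x_2,\infty).$$
   Context: This is the candidate equilibrium payoff of player P2 (the stopper) in the second type of Nash equilibrium of a linear impulse controller–stopper game: state $X_t=x+\sigma W_t+\sum_{\tau_n\le t}\delta_n$, P2 has running payoff $q-x$, gains $d+\gamma|\delta|$ at each impulse of P1, and terminal payoff $-bx$, discounted at rate $r$. *)

From Stdlib Require Import Reals.
Open Scope R_scope.

Definition theta (r sigma : R) : R := sqrt (2 * r / sigma ^ 2).

Definition G (r sigma s c lam a q d gam b : R) (w : R) : R :=
  let th := theta r sigma in
  ((1 - lam * r) * ((ln w - 1) * w ^ 2 + ln w + 1) - c * r * th * (w ^ 2 + 1))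
    / (th * (1 - a * r) * (w - 1) ^ 2)
  + s / (1 - a * r) - q / (1 - b * r)
  - (w + 1) / (th * (w - 1))
  - 2 * (th * r * d - (1 - gam * r) * ln w) * w / (th * (1 - b * r) * (w - 1) ^ 2).

Definition xbar2 (r sigma q d gam b w : R) : R :=
  let th := theta r sigma in
  q / (1 - b * r) + (w + 1) / (th * (w - 1))
  + 2 * (th * r * d - (1 - gam * r) * ln w) * w / (th * (1 - b * r) * (w - 1) ^ 2).

Definition xbar1 (r sigma q d gam b w : R) : R :=
  xbar2 r sigma q d gam b w - ln w / theta r sigma.

Definition C21 (r sigma q d gam b w : R) : R :=
  let th := theta r sigma in
  let x2 := xbar2 r sigma q d gam b w in
  exp (- th * x2) / (2 * r) * ((1 - b * r) * (x2 + 1 / th) - q).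

Definition C22 (r sigma q d gam b w : R) : R :=
  let th := theta r sigma in
  let x2 := xbar2 r sigma q d gam b w in
  exp (th * x2) / (2 * r) * ((1 - b * r) * (x2 - 1 / th) - q).

Definition phi2 (r sigma q d gam b w : R) (x : R) : R :=
  let th := theta r sigma in
  C21 r sigma q d gam b w * exp (th * x) + C22 r sigma q d gam b w * exp (- th * x)
  + (q - x) / r.

Definition W2 (r sigma q d gam b w : R) (x : R) : R :=
  let x2 := xbar2 r sigma q d gam b w in
  let x1 := xbar1 r sigma q d gam b w in
  if Rle_dec x2 x then - b * x
  else if Rlt_dec x1 x then phi2 r sigma q d gam b w x
  else - b * x2 + d + gam * (x2 - x).

(** On the continuation region (xbar1, xbar2) put [S = exp (theta (xbar2 - x))], so that
    [1 < S < what]. A direct computation gives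
    [phi2 x + b x = (S - 1)^2 (margin - (1 - b r) defect_ratio S) / (2 r theta S)], where
    [margin = theta ((1 - b r) xbar2 - q)] and [defect_ratio s = (s^2 - 1 - 2 s ln s) / (s - 1)^2].
    The ratio is increasing on (1, oo), its derivative having the sign of
    [(s + 1) ln s - 2 (s - 1) > 0]; and the definition of xbar2 makes
    [(margin - (1 - b r) defect_ratio what) (what - 1)^2 = 2 what (theta r d + (gam - b) r ln what)],
    which is positive. Left of xbar1, [W2 x + b x = d + (gam - b) (xbar2 - x) > 0]. *)
From Stdlib Require Import Reals Lra Psatz.
From Coquelicot Require Import Coquelicot.
Open Scope R_scope.

Lemma theta_pos (r sigma : R) : 0 < r -> 0 < sigma -> 0 < theta r sigma.
Proof.
  intros Hr Hsigma; apply sqrt_lt_R0, Rdiv_lt_0_compat; [lra | apply pow_lt; lra].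
Qed.

Lemma one_sub_inv_lt_ln (s : R) : 1 < s -> 1 - / s < ln s.
Proof.
  intro Hs.
  assert (Hln : 0 < ln s) by (rewrite <- ln_1; apply ln_increasing; lra).
  pose proof (exp_ineq1 (- ln s) ltac:(lra)) as Hexp.
  rewrite exp_Ropp, exp_ln in Hexp by lra.
  lra.
Qed.

Lemma two_mul_sub1_lt_add1_mul_ln (s : R) : 1 < s -> 2 * (s - 1) < (s + 1) * ln s.
Proof.
  intro Hs.
  destruct (MVT_cor2 (fun y => (y + 1) * ln y - 2 * (y - 1)) (fun y => ln y + / y - 1) 1 s Hs)
    as [c [Hmvt Hc]].
  { intros c Hc; apply is_derive_Reals; auto_derive; [lra | field; lra]. }
  rewrite ln_1 in Hmvt.
  pose proof (one_sub_inv_lt_ln c (proj1 Hc)) as Hderiv.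
  assert (0 < (ln c + / c - 1) * (s - 1)) by (apply Rmult_lt_0_compat; lra).
  lra.
Qed.

Definition defect_ratio (s : R) : R := (s ^ 2 - 1 - 2 * s * ln s) / (s - 1) ^ 2.

Lemma defect_ratio_increasing (s w : R) :
  1 < s -> s < w -> defect_ratio s < defect_ratio w.
Proof.
  intros Hs Hsw.
  destruct (MVT_cor2 defect_ratio
              (fun y => 2 * ((y + 1) * ln y - 2 * (y - 1)) / (y - 1) ^ 3) s w Hsw)
    as [c [Hmvt Hc]].
  { intros c Hc; apply is_derive_Reals; unfold defect_ratio; auto_derive.
    - repeat split; try lra; nra.
    - field; lra. }
  pose proof (two_mul_sub1_lt_add1_mul_ln c ltac:(lra)) as Hnum.
  assert (Hderiv : 0 < 2 * ((c + 1) * ln c - 2 * (c - 1)) / (c - 1) ^ 3).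
  { apply Rdiv_lt_0_compat; [lra | apply pow_lt; lra]. }
  assert (0 < 2 * ((c + 1) * ln c - 2 * (c - 1)) / (c - 1) ^ 3 * (w - s)).
  { apply Rmult_lt_0_compat; lra. }
  lra.
Qed.

Section ContinuationRegion.

Variables r sigma q d gam b w : R.
Hypotheses (Hr : 0 < r) (Hsigma : 0 < sigma) (Hbr : 0 < 1 - b * r).

Local Notation th := (theta r sigma).
Local Notation x2 := (xbar2 r sigma q d gam b w).
Local Notation margin := (th * ((1 - b * r) * x2 - q)).

Lemma phi2_add_linear (x : R) :
  let S := exp (th * (x2 - x)) in
  phi2 r sigma q d gam b w x + b * x
  = (margin * (S - 1) ^ 2 - (1 - b * r) * (S ^ 2 - 1 - 2 * S * (th * (x2 - x))))
    / (2 * r * th * S).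
Proof.
  intro S.
  pose proof (theta_pos r sigma Hr Hsigma) as Hth.
  assert (HS : 0 < S) by (apply exp_pos).
  assert (Eplus : exp (th * x) = exp (th * x2) / S).
  { unfold S; replace (th * x2) with (th * x + th * (x2 - x)) by ring.
    rewrite exp_plus; field; apply Rgt_not_eq, exp_pos. }
  assert (Eminus : exp (- th * x) = exp (- th * x2) * S).
  { unfold S; rewrite <- exp_plus; f_equal; ring. }
  assert (Einv : exp (- th * x2) = / exp (th * x2)).
  { rewrite <- exp_Ropp; f_equal; ring. }
  assert (HE : 0 < exp (th * x2)) by (apply exp_pos).
  unfold phi2, C21, C22; cbv zeta.
  rewrite Eplus, Eminus, Einv.
  replace x with (x2 - th * (x2 - x) / th) at 3 4 by (field; lra).
  field; repeat split; lra.
Qed.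

Lemma xbar2_margin :
  w <> 1 ->
  margin * (w - 1) ^ 2
  = (1 - b * r) * (w ^ 2 - 1) + 2 * (th * r * d - (1 - gam * r) * ln w) * w.
Proof.
  intro Hw.
  pose proof (theta_pos r sigma Hr Hsigma) as Hth.
  unfold xbar2; field; repeat split; try lra.
Qed.

Hypotheses (Hw : 1 < w) (Hd : 0 < d) (Hbgam : b < gam).

Lemma defect_ratio_lt_margin : (1 - b * r) * defect_ratio w < margin.
Proof.
  pose proof (theta_pos r sigma Hr Hsigma) as Hth.
  assert (Hln : 0 < ln w) by (rewrite <- ln_1; apply ln_increasing; lra).
  assert (Hw2 : 0 < (w - 1) ^ 2) by (apply pow_lt; lra).
  apply (Rmult_lt_reg_r ((w - 1) ^ 2)); [exact Hw2 |].
  rewrite xbar2_margin by lra.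
  replace ((1 - b * r) * defect_ratio w * (w - 1) ^ 2)
    with ((1 - b * r) * (w ^ 2 - 1 - 2 * w * ln w)) by (unfold defect_ratio; field; lra).
  assert (0 < th * r * d * w) by (repeat apply Rmult_lt_0_compat; lra).
  assert (0 < (gam - b) * r * ln w * w) by (repeat apply Rmult_lt_0_compat; lra).
  lra.
Qed.

Lemma phi2_gt_linear (x : R) :
  xbar1 r sigma q d gam b w < x < x2 -> phi2 r sigma q d gam b w x > - b * x.
Proof.
  unfold xbar1; intro Hx.
  pose proof (theta_pos r sigma Hr Hsigma) as Hth.
  set (t := th * (x2 - x)).
  assert (Ht0 : 0 < t) by (unfold t; apply Rmult_lt_0_compat; lra).
  assert (Htw : t < ln w).
  { unfold t; replace (ln w) with (th * (ln w / th)) by (field; lra).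
    apply Rmult_lt_compat_l; lra. }
  set (S := exp t).
  assert (HS1 : 1 < S) by (unfold S; rewrite <- exp_0; apply exp_increasing; lra).
  assert (HSw : S < w) by (unfold S; rewrite <- (exp_ln w) by lra; apply exp_increasing; lra).
  assert (HS2 : 0 < (S - 1) ^ 2) by (apply pow_lt; lra).
  assert (Hmono : (1 - b * r) * defect_ratio S < (1 - b * r) * defect_ratio w).
  { apply Rmult_lt_compat_l; [lra | exact (defect_ratio_increasing S w HS1 HSw)]. }
  pose proof (defect_ratio_lt_margin) as Hmargin.
  assert (Hnum : 0 < (S - 1) ^ 2 * (margin - (1 - b * r) * defect_ratio S)).
  { apply Rmult_lt_0_compat; lra. }
  pose proof (phi2_add_linear x) as Hphi; cbv zeta in Hphi; fold t S in Hphi.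
  replace (2 * S * t) with (2 * S * ln S) in Hphi by (unfold S; rewrite ln_exp; reflexivity).
  assert (Hden : 0 < 2 * r * th * S) by (repeat apply Rmult_lt_0_compat; lra).
  assert (Hfactor : margin * (S - 1) ^ 2 - (1 - b * r) * (S ^ 2 - 1 - 2 * S * ln S)
                    = (S - 1) ^ 2 * (margin - (1 - b * r) * defect_ratio S))
    by (unfold defect_ratio; field; lra).
  rewrite Hfactor in Hphi.
  assert (0 < phi2 r sigma q d gam b w x + b * x)
    by (rewrite Hphi; apply Rdiv_lt_0_compat; assumption).
  lra.
Qed.

Lemma W2_gt_linear (x : R) : x < x2 -> W2 r sigma q d gam b w x > - b * x.
Proof.
  intro Hx; unfold W2.
  destruct (Rle_dec x2 x) as [Hle | _]; [lra |].
  destruct (Rlt_dec (xbar1 r sigma q d gam b w) x) as [Hlt | _].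
  - exact (phi2_gt_linear x (conj Hlt Hx)).
  - assert (0 < (gam - b) * (x2 - x)) by (apply Rmult_lt_0_compat; lra).
    lra.
Qed.

End ContinuationRegion.

Lemma W2_eq_linear (r sigma q d gam b w x : R) :
  xbar2 r sigma q d gam b w <= x -> W2 r sigma q d gam b w x = - b * x.
Proof.
  intro Hx; unfold W2; destruct (Rle_dec _ x); [reflexivity | contradiction].
Qed.

Theorem lemmaA4 (r sigma s c lam a q d gam b what : R) :
  0 < r -> 0 < sigma -> 0 < s -> 0 < c -> 0 < lam -> 0 < a -> 0 < q ->
  0 < d -> 0 < gam -> 0 < b ->
  a < lam -> b < gam -> 0 < 1 - lam * r -> 0 < 1 - b * r ->
  1 < what ->
  G r sigma s c lam a q d gam b what = 0 ->
  0 <= (1 - b * r) * (what ^ 2 - 1)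
       + 2 * (theta r sigma * r * d - (1 - gam * r) * ln what) * what ->
  (1 - b * r) * (what ^ 2 - 1)
       + 2 * (theta r sigma * r * d - (1 - gam * r) * ln what) * what
    < (1 - b * r) * (what - 1) ^ 2 ->
  (forall x : R,
     W2 r sigma q d gam b what x > - b * x <-> x < xbar2 r sigma q d gam b what) /\
  (forall x : R,
     W2 r sigma q d gam b what x = - b * x <-> xbar2 r sigma q d gam b what <= x).
Proof.
  intros Hr Hsigma _ _ _ _ _ Hd _ _ _ Hbgam _ Hbr Hw _ _ _.
  set (x2 := xbar2 r sigma q d gam b what).
  assert (Hleft : forall x, x < x2 -> W2 r sigma q d gam b what x > - b * x)
    by (intro; apply W2_gt_linear; assumption).
  assert (Hright : forall x, x2 <= x -> W2 r sigma q d gam b what x = - b * x)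
    by (intro; apply W2_eq_linear).
  split; intro x; destruct (Rle_dec x2 x) as [Hle | Hlt].
  - rewrite (Hright x Hle); lra.
  - split; [lra | intro; apply Hleft; lra].
  - split; intros _; [exact Hle | exact (Hright x Hle)].
  - pose proof (Hleft x ltac:(lra)); split; intro; lra.
Qed.
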